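(* For arbitrarily large integers $n$ there exists a family $\mathcal{F}$ of subsets of $[n]$ with $|\mathcal{F}|\ge 8n/3$ having the following two properties: (i) every $A\in\mathcal{F}$ has odd cardinality; (ii) there are no distinct $A,B,C\in\mathcal{F}$ such that $|A\cap B|$, $|A\cap C|$ and $|B\cap C|$ are all odd. *)

From mathcomp Require Import all_boot.
Set Implicit Arguments. Unset Strict Implicit. Unset Printing Implicit Defensive.

(* [n] is modelled as the finite type 'I_n = {0,...,n-1}; a family of
   subsets of [n] is a finite set of finite sets over 'I_n. *)

Definition all_odd (n : nat) (F : {set {set 'I_n}}) : Prop :=
  forall A, A \in F -> odd #|A|.

Definition no_odd_triangle (n : nat) (F : {set {set 'I_n}}) : Prop :=
  ~ exists A B C : {set 'I_n},
      [/\ A \in F, B \in F, C \in F,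
          [/\ A != B, A != C & B != C] &
          [/\ odd #|A :&: B|, odd #|A :&: C| & odd #|B :&: C|]].

From mathcomp Require Import all_boot.

Set Implicit Arguments.
Unset Strict Implicit.
Unset Printing Implicit Defensive.

(* A 16-member family on [6] with odd members and no odd triangle already
   attains |F| = 8n/3: the five singletons {a} and the set {0,...,4},
   together with the ten triples {a, b, 5} (a < b < 5).  Two triples meet
   oddly only when their pairs {a, b} are disjoint, and {0,...,4} holds no
   three disjoint pairs; the remaining cases are similar and are checked by
   evaluation.  Taking m disjoint copies of it on m blocks of six points
   keeps both properties, because sets from different blocks meet evenly (in
   the empty set), and gives 16m = 8(6m)/3 sets on 6m points. *)

Lemma setXI (T1 T2 : finType) (A1 B1 : {set T1}) (A2 B2 : {set T2}) :
  setX A1 A2 :&: setX B1 B2 = setX (A1 :&: B1) (A2 :&: B2).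
Proof. by apply/setP => -[x y]; rewrite !inE andbACA. Qed.

Lemma cards1I (T : finType) (t t' : T) : #|[set t] :&: [set t']| = (t == t').
Proof.
case: eqVneq => [<- | neq_tt']; first by rewrite setIid cards1.
by apply/eqP; rewrite cards_eq0 setI_eq0 disjoints1 in_set1 neq_tt'.
Qed.

Section DisjointCopies.

Variables (k n : nat) (T : finType) (g : T * 'I_k -> 'I_n).
Hypothesis g_inj : injective g.

Definition copy (t : T) (S : {set 'I_k}) : {set 'I_n} := g @: setX [set t] S.

Lemma card_copyI t t' (S S' : {set 'I_k}) :
  #|copy t S :&: copy t' S'| = (t == t') * #|S :&: S'|.
Proof.
rewrite -imsetI; last by move=> ? ? _ _; apply: g_inj.
by rewrite card_imset // setXI cardsX cards1I.
Qed.

Lemma odd_card_copyI t t' (S S' : {set 'I_k}) :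
  odd #|copy t S :&: copy t' S'| = (t == t') && odd #|S :&: S'|.
Proof. by rewrite card_copyI oddM oddb. Qed.

Lemma copy_inj t t' (S S' : {set 'I_k}) :
  0 < #|S| -> copy t S = copy t' S' -> (t, S) = (t', S').
Proof.
move=> S_gt0 eq_copy.
have : 0 < (t == t') * #|S :&: S'|.
  by rewrite -card_copyI -eq_copy card_copyI eqxx mul1n setIid.
rewrite muln_gt0 lt0b => /andP [/eqP eq_tt' _].
rewrite -{}eq_tt' in eq_copy *; congr (_, _).
have eq_setX := imset_inj g_inj eq_copy.
apply/setP => x; have := congr1 (fun A : {set T * 'I_k} => (t, x) \in A) eq_setX.
by rewrite /= !inE eqxx.
Qed.

Variable G : {set {set 'I_k}}.
Hypotheses (G_odd : all_odd G) (G_triangle_free : no_odd_triangle G).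

Definition copies : {set {set 'I_n}} := [set copy p.1 p.2 | p in setX [set: T] G].

Lemma card_copies : #|copies| = #|T| * #|G|.
Proof.
rewrite card_in_imset ?cardsX ?cardsT // => -[t S] [t' S'] /setXP [_ GS] _.
exact/copy_inj/odd_gt0/G_odd.
Qed.

Lemma copies_odd : all_odd copies.
Proof.
move=> _ /imsetP [[t S] /setXP [_ GS] ->] /=.
by have := odd_card_copyI t t S S; rewrite !setIid eqxx => ->; apply: G_odd.
Qed.

Lemma copies_triangle_free : no_odd_triangle copies.
Proof.
move=> [_ [_ [_ [/imsetP [[a S] /setXP [_ GS] ->]
                 /imsetP [[b S'] /setXP [_ GS'] ->]
                 /imsetP [[c S''] /setXP [_ GS''] ->] /=
                 [nSS' nSS'' nS'S''] [oSS' oSS'' oS'S'']]]]].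
move: oSS' oSS'' oS'S''; rewrite !odd_card_copyI.
move=> /andP [/eqP eq_ab oSS'] /andP [/eqP eq_ac oSS''] /andP [_ oS'S''].
subst b c.
apply: G_triangle_free; exists S, S', S''; split => //.
by split; [apply: contra_neq nSS' | apply: contra_neq nSS'' | apply: contra_neq nS'S''] => ->.
Qed.

End DisjointCopies.

Definition ord_set (k : nat) (l : seq nat) : {set 'I_k} := [set x : 'I_k | val x \in l].

Lemma card_ord_setI k l l' :
  #|ord_set k l :&: ord_set k l'| = count [predI mem l & mem l'] (iota 0 k).
Proof.
have -> : ord_set k l :&: ord_set k l' = [set x : 'I_k | [predI mem l & mem l'] x].
  by apply/setP => x; rewrite !inE.
by rewrite cardsE cardE /enum_mem size_filter -val_enum_ord count_map enumT.
Qed.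

Definition gadget_seqs : seq (seq nat) :=
  iota 0 5 :: [seq [:: a] | a <- iota 0 5] ++
  [seq [:: a; b; 5] | a <- iota 0 5, b <- iota a.+1 (4 - a)].

Definition gadget : {set {set 'I_6}} := [set:: map (ord_set 6) gadget_seqs].

Definition meet6 (l l' : seq nat) : nat := count [predI mem l & mem l'] (iota 0 6).

Lemma gadgetP A : reflect (exists2 l, l \in gadget_seqs & A = ord_set 6 l) (A \in gadget).
Proof. by rewrite inE; apply: mapP. Qed.

Lemma card_gadget : #|gadget| = 16.
Proof.
have seqs_uniq : uniq gadget_seqs by vm_compute.
have seqs_separated : all (fun l => all (fun l' =>
    [|| l == l', meet6 l l' != meet6 l l | meet6 l l' != meet6 l' l'])
    gadget_seqs) gadget_seqs by vm_compute.
have map_uniq : uniq (map (ord_set 6) gadget_seqs).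
  rewrite map_inj_in_uniq // => l l' Gl Gl' eq_set.
  move/allP/(_ l Gl)/allP/(_ l' Gl'): seqs_separated.
  by rewrite /meet6 -!card_ord_setI eq_set setIid !eqxx !orbF => /eqP.
by rewrite cardsE (card_uniqP map_uniq) size_map.
Qed.

Lemma gadget_odd : all_odd gadget.
Proof.
have seqs_odd : all (fun l => odd (meet6 l l)) gadget_seqs by vm_compute.
move=> _ /gadgetP [l Gl ->].
by rewrite -[ord_set 6 l]setIid card_ord_setI (allP seqs_odd).
Qed.

Lemma gadget_triangle_free : no_odd_triangle gadget.
Proof.
have seqs_triangle_free : all (fun l => all (fun l' => all (fun l'' =>
    [&& l != l', l != l'' & l' != l''] ==>
    ~~ [&& odd (meet6 l l'), odd (meet6 l l'') & odd (meet6 l' l'')])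
    gadget_seqs) gadget_seqs) gadget_seqs by vm_compute.
move=> [_ [_ [_ [/gadgetP [l Gl ->] /gadgetP [l' Gl' ->] /gadgetP [l'' Gl'' ->]
                 [nAB nAC nBC] [oAB oAC oBC]]]]].
move/allP/(_ l Gl)/allP/(_ l' Gl')/allP/(_ l'' Gl''): seqs_triangle_free.
rewrite /meet6 -!card_ord_setI oAB oAC oBC andbT.
have neq_seqs (s s' : seq nat) : ord_set 6 s != ord_set 6 s' -> s != s'.
  by apply: contra_neq => ->.
by rewrite !neq_seqs.
Qed.

Theorem lemma4p2 :
  forall N : nat, exists n : nat, N <= n /\
    exists F : {set {set 'I_n}},
      8 * n <= 3 * #|F| /\ all_odd F /\ no_odd_triangle F.
Proof.
move=> N; exists (N * 6); split; first by rewrite leq_pmulr.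
have card_blocks : #|{: 'I_N * 'I_6}| = N * 6 by rewrite card_prod !card_ord.
pose g := cast_ord card_blocks \o enum_rank.
have g_inj : injective g by apply: inj_comp; [exact: cast_ord_inj | exact: enum_rank_inj].
exists (copies g gadget); split; last split.
- rewrite (card_copies g_inj gadget_odd) card_ord card_gadget.
  by rewrite mulnCA [3 * _]mulnCA.
- exact: (copies_odd g_inj gadget_odd).
- exact: (copies_triangle_free g_inj gadget_triangle_free).
Qed.
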